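(* Suppose that for all positive integers $s,t,k$ with $st \le k^2$ one has $R(s,t) \le R(k,k)$. Suppose moreover that the limit $\lim_{k \to \infty} \frac{\log(R(k,k))}{k}$ exists and equals $\mathcal{L}$. Then \[ f(n) = \big(\mathcal{L}^2 + o(1)\big)\frac{n}{(\log n)^2}, \] that is, $\lim_{n\to\infty} \frac{(\log n)^2}{n} f(n) = \mathcal{L}^2$.
   Context: All logarithms are in base 2. For positive integers $s,t$, the Ramsey number $R(s,t)$ is the minimum $n$ such that every red/blue edge-coloring of the complete graph $K_n$ contains a red clique on $s$ vertices or a blue clique on $t$ vertices. For a graph $G$, $\chi(G)$ is its chromatic number and $\omega(G)$ its clique number. For $n \in \mathbb{N}$, $f(n)$ is the maximum of $\chi(G)/\omega(G)$ over all graphs $G$ on $n$ vertices. Here $o(1)$ denotes a quantity tending to $0$ as $n \to \infty$. *)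

From HB Require Import structures.
From mathcomp Require Import all_boot all_order all_algebra.
From mathcomp Require Import boolp classical_sets reals topology normedtype sequences exp.
Set Implicit Arguments. Unset Strict Implicit. Unset Printing Implicit Defensive.
Import Order.TTheory GRing.Theory Num.Theory numFieldNormedType.Exports.

(* Least natural number satisfying P (a classical, possibly undecidable
   predicate); 0 if no such number exists (never used in that case). *)
Definition least_nat (P : nat -> Prop) : nat :=
  match pselect (exists n, P n) with
  | left h => ex_minn (P := fun n => `[< P n >]) (let: ex_intro n Pn := h in
                        ex_intro _ n (asboolT Pn))
  | right _ => 0
  end.

(* A red/blue edge-colouring of K_n: a symmetric c : 'I_n -> 'I_n -> bool,
   the edge {i,j} (i != j) is red iff c i j = true, blue otherwise. *)
Definition ramsey_prop (s t n : nat) : Prop :=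
  forall c : 'I_n -> 'I_n -> bool, (forall i j, c i j = c j i) ->
  exists S : {set 'I_n},
    (#|S| = s /\ forall i j, i \in S -> j \in S -> i != j -> c i j) \/
    (#|S| = t /\ forall i j, i \in S -> j \in S -> i != j -> ~~ c i j).

Definition Ramsey (s t : nat) : nat := least_nat (ramsey_prop s t).

Definition simple_graph n (G : {ffun 'I_n -> {ffun 'I_n -> bool}}) : bool :=
  [forall i, ~~ G i i] && [forall i, forall j, G i j == G j i].

Definition proper_colouring n k (G : {ffun 'I_n -> {ffun 'I_n -> bool}})
    (c : 'I_n -> 'I_k) : Prop :=
  forall i j, G i j -> c i != c j.

Definition chi n (G : {ffun 'I_n -> {ffun 'I_n -> bool}}) : nat :=
  least_nat (fun k => exists c : 'I_n -> 'I_k, proper_colouring G c).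

Definition is_clique n (G : {ffun 'I_n -> {ffun 'I_n -> bool}}) (S : {set 'I_n}) : bool :=
  [forall i in S, forall j in S, (i != j) ==> G i j].

Definition omega n (G : {ffun 'I_n -> {ffun 'I_n -> bool}}) : nat :=
  \max_(S : {set 'I_n} | is_clique G S) #|S|.

Local Open Scope ring_scope.

Definition fratio (R : realType) (n : nat) : R :=
  \big[Num.max/0]_(G : {ffun 'I_n -> {ffun 'I_n -> bool}} | simple_graph G)
     ((chi G)%:R / (omega G)%:R).

Definition log2 (R : realType) (x : R) : R := ln x / ln 2.

From HB Require Import structures.
From mathcomp Require Import all_boot all_order all_algebra.
From mathcomp Require Import boolp zify ring lra.
Import Order.TTheory GRing.Theory Num.Theory.
Set Implicit Arguments. Unset Strict Implicit. Unset Printing Implicit Defensive.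

(** Write λ = L ln 2 for the limit of ln R(k, k) / k.
    Lower bound: for n < R(j+1, j+1), a red/blue colouring of K_n with no
    monochromatic K_(j+1) is a graph whose clique and independence numbers are
    at most j, so f(n) >= n / j^2; for the j with R(j, j) <= n < R(j+1, j+1)
    we have ln n >= (λ - o(1)) j.
    Upper bound: removing independent t-sets greedily while at least R(w+1, t)
    vertices remain shows chi <= n / t + R(w+1, t) for a graph of clique
    number w; with t = ceil(k^2 / w) this gives chi / w <= n / k^2 + R(w+1, t).
    If w or t is at most D, Erdos-Szekeres makes R(w+1, t) polynomial in k;
    otherwise (w+1) t <= ((1 + 1/D) k)^2 and the hypothesis gives
    R(w+1, t) <= e^((λ + o(1)) (1 + 1/D) k). For k close to ln n / (λ + eps)
    both error terms are o(n / (ln n)^2). *)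

Lemma least_natP (P : nat -> Prop) n : P n -> P (least_nat P).
Proof.
move=> Pn; rewrite /least_nat; case: pselect => [?|[]]; last by exists n.
by case: ex_minnP => m /asboolP.
Qed.

Lemma least_nat_le (P : nat -> Prop) n : P n -> least_nat P <= n.
Proof.
move=> Pn; rewrite /least_nat; case: pselect => [?|[]]; last by exists n.
by case: ex_minnP => m _; apply; apply/asboolP.
Qed.

Lemma subset_of_card (T : finType) (A : {set T}) k : k <= #|A| ->
  exists2 B : {set T}, B \subset A & #|B| = k.
Proof.
case/card_geqP=> s [uniq_s <- sA]; exists [set x in s].
  by apply/subsetP => x; rewrite inE => /sA.
by rewrite cardsE; apply/card_uniqP.
Qed.

Lemma bin_sym a b : 'C(a + b, a) = 'C(a + b, b).
Proof. by rewrite -[LHS](bin_sub (leq_addr b a)) addKn. Qed.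

Section RamseyWithin.
Context {T : finType}.

Implicit Types (c : T -> T -> bool) (U : {set T}).

Definition red_clique (c : T -> T -> bool) (S : {set T}) :=
  forall i j, i \in S -> j \in S -> i != j -> c i j.

Definition blue_clique (c : T -> T -> bool) (S : {set T}) :=
  forall i j, i \in S -> j \in S -> i != j -> ~~ c i j.

Definition ramsey_within (c : T -> T -> bool) s t (U : {set T}) :=
  exists2 S : {set T}, S \subset U &
    (#|S| = s /\ red_clique c S) \/ (#|S| = t /\ blue_clique c S).

Lemma ramsey_within_swap c s t U :
  ramsey_within (fun i j => ~~ c i j) t s U -> ramsey_within c s t U.
Proof.
case=> S sSU [[cS bS]|[cS rS]]; exists S => //; [right | left]; split=> //.
by move=> i j iS jS ij; rewrite -[c i j]negbK; apply: rS.
Qed.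

Lemma ramsey_within_extend c s t U (v : T) :
  (forall i j, c i j = c j i) -> v \in U ->
  ramsey_within c s t [set u in U :\ v | c v u] -> ramsey_within c s.+1 t U.
Proof.
move=> c_sym vU [S sSN HS]; have sSU : S \subset U.
  by apply: subset_trans sSN _; apply/subsetP => u; rewrite !inE => /andP[/andP[]].
case: HS => [[cS rS]|]; last by exists S => //; right.
have vS : v \notin S by apply/negP => /(subsetP sSN); rewrite !inE eqxx.
have cvS u : u \in S -> c v u by move/(subsetP sSN); rewrite inE => /andP[].
exists (v |: S); first by rewrite subUset sub1set vU.
left; split; first by rewrite cardsU1 vS cS.
move=> i j; rewrite !in_setU1 => /predU1P[->|iS] /predU1P[->|jS];
  rewrite ?eqxx // => ij; [exact: cvS | rewrite c_sym; exact: cvS | exact: rS].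
Qed.

Lemma erdos_szekeres c s t U : (forall i j, c i j = c j i) ->
  'C(s + t, s) <= #|U| -> ramsey_within c s.+1 t.+1 U.
Proof.
have [m lt_st_m] := ubnP (s + t).
elim: m => // m IHm in c s t U lt_st_m *; move=> c_sym hU.
have [v vU] : exists v, v \in U.
  by apply/card_gt0P; apply: leq_trans hU; rewrite bin_gt0 leq_addr.
have single_red t' : ramsey_within c 1 t' U.
  exists [set v]; rewrite ?sub1set //; left; split; first exact: cards1.
  by move=> i j /set1P-> /set1P->; rewrite eqxx.
have single_blue s' : ramsey_within c s' 1 U.
  exists [set v]; rewrite ?sub1set //; right; split; first exact: cards1.
  by move=> i j /set1P-> /set1P->; rewrite eqxx.
case: s => [|s] in lt_st_m hU *; first exact: single_red.
case: t => [|t] in lt_st_m hU *; first exact: single_blue.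
pose red := [set u in U :\ v | c v u].
pose blue := [set u in U :\ v | ~~ c v u].
have card_nbhd : #|red| + #|blue| = #|U| - 1.
  rewrite (cardsD1 v U) vU add1n subn1 /= -(cardsID [set u | c v u] (U :\ v)).
  by congr (_ + _); apply: eq_card => u; rewrite !inE andbC.
have pascal : 'C(s.+1 + t.+1, s.+1) = 'C(s + t.+1, s) + 'C(t + s.+1, t).
  have -> : 'C(t + s.+1, t) = 'C(s + t.+1, s.+1).
    by rewrite bin_sym; congr 'C(_, _); lia.
  by rewrite addSn binS addnC.
have [le_red|lt_red] := leqP 'C(s + t.+1, s) #|red|.
  by apply: (@ramsey_within_extend _ _ _ _ v) => //; apply: IHm le_red => //; lia.
have le_blue : 'C(t + s.+1, t) <= #|blue| by rewrite pascal in hU; lia.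
apply: ramsey_within_swap; apply: (@ramsey_within_extend _ _ _ _ v) => //.
  by move=> i j; rewrite c_sym.
apply: IHm le_blue; first lia.
by move=> i j; rewrite c_sym.
Qed.

End RamseyWithin.

Lemma leq_bin_exp a b : 'C(a + b, b) <= a.+1 ^ b.
Proof.
elim: b => [|b IHb]; first by rewrite addn0 bin0.
rewrite -(@leq_pmul2l b.+1) // -mul_bin_diag addnS /=.
apply: (@leq_trans ((a + b).+1 * a.+1 ^ b)); first by rewrite leq_mul2l IHb orbT.
by rewrite expnS mulnA leq_mul2r; apply/orP; right; nia.
Qed.

Lemma ramsey_propE s t n : ramsey_prop s t n <->
  forall c : 'I_n -> 'I_n -> bool, (forall i j, c i j = c j i) ->
    ramsey_within c s t [set: 'I_n].
Proof.
split=> H c c_sym; first by have [S HS] := H c c_sym; exists S; rewrite ?subsetT.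
by have [S _ HS] := H c c_sym; exists S.
Qed.

Lemma ramsey_prop_bin s t : ramsey_prop s.+1 t.+1 'C(s + t, s).
Proof.
apply/ramsey_propE => c c_sym.
by apply: erdos_szekeres; rewrite // cardsT card_ord.
Qed.

Lemma ramsey_prop_Ramsey s t : ramsey_prop s.+1 t.+1 (Ramsey s.+1 t.+1).
Proof. exact: least_natP (@ramsey_prop_bin s t). Qed.

Lemma Ramsey_le_bin s t : Ramsey s.+1 t.+1 <= 'C(s + t, s).
Proof. exact: least_nat_le (@ramsey_prop_bin s t). Qed.

Lemma Ramsey_diag_ge k : k <= Ramsey k k.
Proof.
case: k => // k; have /ramsey_propE := @ramsey_prop_Ramsey k k.
case/(_ (fun _ _ => true)) => // S _ [[cS _]|[cS _]];
  by rewrite -{1}cS -[X in _ <= X]card_ord max_card.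
Qed.

Lemma ramsey_within_Ramsey (T : finType) (c : T -> T -> bool) s t (U : {set T}) :
  (forall i j, c i j = c j i) -> Ramsey s.+1 t.+1 <= #|U| ->
  ramsey_within c s.+1 t.+1 U.
Proof.
move=> c_sym hU; pose f (i : 'I_(Ramsey s.+1 t.+1)) := enum_val (widen_ord hU i).
have f_inj : injective f by move=> i j /enum_val_inj /(congr1 val) /= /val_inj.
have [S _ HS] :=
  (ramsey_propE _ _ _).1 (@ramsey_prop_Ramsey s t) _ (fun i j => c_sym (f i) (f j)).
exists (f @: S); first by apply/subsetP => _ /imsetP[i _ ->]; apply: enum_valP.
rewrite (card_imset _ f_inj); case: HS => [[cS rS]|[cS bS]]; [left | right];
  split=> // _ _ /imsetP[i iS ->] /imsetP[j jS ->] fij;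
  [apply: rS | apply: bS] => //; by apply: contra fij => /eqP ->.
Qed.

Lemma ltn_Ramsey n s t : n < Ramsey s.+1 t.+1 ->
  exists2 c : 'I_n -> 'I_n -> bool, (forall i j, c i j = c j i) &
    ~ ramsey_within c s.+1 t.+1 [set: 'I_n].
Proof.
move=> lt_n; apply: contrapT => no_c.
suff /(@least_nat_le (ramsey_prop _ _)) : ramsey_prop s.+1 t.+1 n by rewrite leqNgt lt_n.
apply/ramsey_propE => c c_sym; apply: contrapT => not_c.
exact: no_c (ex_intro2 _ _ c c_sym not_c).
Qed.

Local Notation graph n := {ffun 'I_n -> {ffun 'I_n -> bool}}.

Section Graphs.
Variable n : nat.
Implicit Types (G : graph n) (S U : {set 'I_n}).

Local Notation edge G := (fun i j : 'I_n => G i j).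

Lemma simple_graph_irr G : simple_graph G -> forall i, ~~ G i i.
Proof. by case/andP => /forallP. Qed.

Lemma simple_graph_sym G : simple_graph G -> forall i j, G i j = G j i.
Proof. by case/andP => _ /forallP sG i j; apply/eqP; move/forallP: (sG i). Qed.

Definition independent G S := forall i j, i \in S -> j \in S -> ~~ G i j.

Lemma independent_blue G S : simple_graph G -> blue_clique (edge G) S -> independent G S.
Proof.
move=> sG bS i j iS jS; have [<-|ij] := eqVneq i j; last exact: bS.
exact: simple_graph_irr.
Qed.

Lemma is_cliqueP G S : reflect (red_clique (edge G) S) (is_clique G S).
Proof.
apply: (iffP forallP) => [cS i j iS jS ij | rS i].
  by move/implyP: (cS i) => /(_ iS) /forallP /(_ j); rewrite jS ij.
by apply/implyP => iS; apply/forallP => j; apply/implyP => jS; apply/implyP; apply: rS.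
Qed.

Lemma omega_max G S : is_clique G S -> #|S| <= omega G.
Proof. exact: (@leq_bigmax_cond _ (is_clique G) (fun S => #|S|)). Qed.

Lemma omega_le G w : (forall S, is_clique G S -> #|S| <= w) -> omega G <= w.
Proof. by move=> H; apply/bigmax_leqP. Qed.

Lemma omega_gt0 G : 0 < n -> 0 < omega G.
Proof.
move=> n_gt0; have := @omega_max G [set Ordinal n_gt0]; rewrite cards1; apply.
by apply/is_cliqueP => i j /set1P-> /set1P->; rewrite eqxx.
Qed.

Definition colourable_on G U q := exists c : 'I_n -> nat,
  (forall i, i \in U -> c i < q) /\
  (forall i j, i \in U -> j \in U -> G i j -> c i != c j).

Lemma colourable_on_card G U : simple_graph G -> colourable_on G U #|U|.
Proof.
move=> sG; exists (index^~ (enum U)); split=> [i iU | i j iU jU Gij].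
  by rewrite cardE index_mem mem_enum.
apply: contraTneq Gij => /(congr1 (nth i (enum U))).
by rewrite !nth_index ?mem_enum // => ->; apply: simple_graph_irr.
Qed.

Lemma chi_le G q : colourable_on G [set: 'I_n] q -> chi G <= q.
Proof.
case=> c [c_lt c_proper].
have col_q : exists c' : 'I_n -> 'I_q, proper_colouring G c'.
  by exists (fun i => Ordinal (c_lt i (in_setT i))) => i j; apply: c_proper.
exact: least_nat_le col_q.
Qed.

Lemma chi_colouring G : simple_graph G ->
  exists c : 'I_n -> 'I_(chi G), proper_colouring G c.
Proof.
move=> sG; pose colourable k := exists c : 'I_n -> 'I_k, proper_colouring G c.
suff /least_natP : colourable n by [].
by exists id => i j; apply: contraTneq => ->; apply: simple_graph_irr.
Qed.

Lemma leq_chi_independent G a : simple_graph G ->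
  (forall S, independent G S -> #|S| <= a) -> n <= chi G * a.
Proof.
move=> sG le_a; have [c c_proper] := chi_colouring sG.
rewrite -[X in X <= _]card_ord -sum1_card (partition_big c xpredT) //=.
rewrite -[X in _ <= X * _]card_ord -sum_nat_const; apply: leq_sum => k _.
rewrite sum1_card -cardsE; apply: le_a => i j; rewrite !inE => /eqP ci /eqP cj.
by apply/negP => /c_proper; rewrite -val_eqE ci cj eqxx.
Qed.

(* Greedy: remove independent t-sets while at least M vertices remain. *)
Lemma greedy_colouring G t M : simple_graph G -> 0 < t ->
  (forall U, M <= #|U| -> exists2 I : {set 'I_n}, I \subset U & #|I| = t /\ independent G I) ->
  forall U, exists2 q, q * t <= #|U| + M * t & colourable_on G U q.
Proof.
move=> sG t_gt0 indep_M U; have [N] := ubnP #|U|; elim: N => // N IHN in U *.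
move=> lt_U_N; have [lt_U_M|le_M_U] := ltnP #|U| M.
  exists #|U|; last exact: colourable_on_card.
  by apply: leq_trans (leq_addl _ _); rewrite leq_mul2r ltnW ?orbT.
have [I sIU [cI indI]] := indep_M U le_M_U.
have card_UI : #|U :\: I| = #|U| - t by rewrite cardsD (setIidPr sIU) cI.
have le_t_U : t <= #|U| by rewrite -cI subset_leq_card.
have [|q le_q [c [c_lt c_proper]]] := IHN (U :\: I); first by rewrite card_UI; lia.
exists q.+1; first by rewrite mulSn; rewrite card_UI in le_q; lia.
exists (fun i => if i \in I then q else c i); split=> [i iU | i j iU jU Gij].
  by case: ifP => iI //; apply/ltnW/c_lt; rewrite inE iI.
case: ifP => iI; case: ifP => jI.
- by move: (indI i j iI jI); rewrite Gij.
- by rewrite neq_ltn c_lt ?orbT // inE jI.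
- by rewrite neq_ltn c_lt // inE iI.
- by apply: c_proper; rewrite // inE ?iI ?jI.
Qed.

Lemma chi_Ramsey G t : simple_graph G -> 0 < t ->
  chi G * t <= n + Ramsey (omega G).+1 t * t.
Proof.
move=> sG; case: t => // t _.
have indep_R U : Ramsey (omega G).+1 t.+1 <= #|U| ->
    exists2 I : {set 'I_n}, I \subset U & #|I| = t.+1 /\ independent G I.
  case/(ramsey_within_Ramsey (simple_graph_sym sG)) => S sSU [[cS /is_cliqueP]|[cS bS]].
    by move/omega_max; rewrite cS ltnn.
  by exists S => //; split=> //; apply: independent_blue.
have [q le_q /chi_le le_chi] := greedy_colouring sG (ltn0Sn t) indep_R [set: 'I_n].
rewrite cardsT card_ord in le_q; apply: leq_trans le_q.
by rewrite leq_mul2r le_chi orbT.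
Qed.

End Graphs.

Lemma graph_of_colouring n j : n < Ramsey j.+1 j.+1 ->
  exists2 G : graph n, simple_graph G & n <= chi G * j /\ omega G <= j.
Proof.
case/ltn_Ramsey => c c_sym no_mono.
pose G : graph n := [ffun i => [ffun k => (i != k) && c i k]].
have sG : simple_graph G.
  apply/andP; split.
    by apply/forallP => i; rewrite /G !ffunE eqxx.
  by apply/forallP => i; apply/forallP => k; rewrite /G !ffunE (eq_sym k i) (c_sym k i).
exists G => //; split.
  apply: leq_chi_independent => // S indS; rewrite leqNgt; apply/negP.
  case/subset_of_card => B sBS cB; apply: no_mono; exists B; rewrite ?subsetT //; right.
  split=> // x y xB yB xy; move: (indS x y (subsetP sBS x xB) (subsetP sBS y yB)).
  by rewrite /G !ffunE xy.
apply: omega_le => S /is_cliqueP cS; rewrite leqNgt; apply/negP.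
case/subset_of_card => B sBS cB; apply: no_mono; exists B; rewrite ?subsetT //; left.
split=> // x y xB yB xy; move: (cS x y (subsetP sBS x xB) (subsetP sBS y yB) xy).
by rewrite /G !ffunE xy.
Qed.

Lemma leq_expn2r m n e : m <= n -> m ^ e <= n ^ e.
Proof. by case: e => // e; rewrite leq_exp2r. Qed.

Definition Ramsey_diagonal_dominant := forall s t k : nat,
  0 < s -> 0 < t -> 0 < k -> s * t <= k ^ 2 -> Ramsey s t <= Ramsey k k.

Definition stretch D k := k + k %/ D + 1.

Lemma leq_stretch D k : k <= stretch D k.
Proof. by rewrite /stretch -addnA leq_addr. Qed.

Lemma mul_leq_stretch_sq D k w q : 0 < D -> D < w -> D <= q -> q * w < k ^ 2 ->
  w.+1 * q.+1 <= stretch D k ^ 2.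
Proof.
rewrite /stretch => D_gt0 lt_Dw le_Dq lt_qw; have lt_k := ltn_ceil k D_gt0.
have le_wq_k : D * (w + q) <= 2 * k ^ 2 by nia.
have lt_k2 : 2 * k ^ 2 < 2 * k * ((k %/ D).+1 * D) by rewrite expnS expn1; nia.
nia.
Qed.

(* If w <= D or q < D, the Erdos-Szekeres bound is a polynomial in k; otherwise
   (w + 1) (q + 1) <= stretch D k ^ 2 and the hypothesis applies. *)
Lemma Ramsey_le_stretch D k w q : Ramsey_diagonal_dominant -> 0 < D -> 0 < w ->
  q * w < k ^ 2 -> Ramsey w.+1 q.+1 <= k ^ (2 * D) + Ramsey (stretch D k) (stretch D k).
Proof.
move=> dominant D_gt0 w_gt0 lt_qw.
have k_gt0 : 0 < k by case: k lt_qw; rewrite ?ltn0.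
have le_pow e : e <= D -> (k ^ 2) ^ e <= k ^ (2 * D).
  by move=> le_eD; rewrite expnM leq_pexp2l ?expn_gt0 ?k_gt0.
have [le_wD|lt_Dw] := leqP w D.
  apply: leq_trans (leq_addr _ _); rewrite (leq_trans (Ramsey_le_bin _ _)) //.
  rewrite addnC (leq_trans (leq_bin_exp _ _)) // (leq_trans _ (le_pow _ le_wD)) //.
  by apply: leq_expn2r; apply: leq_ltn_trans lt_qw; rewrite leq_pmulr.
have [lt_qD|le_Dq] := ltnP q D.
  apply: leq_trans (leq_addr _ _); rewrite (leq_trans (Ramsey_le_bin _ _)) //.
  rewrite bin_sym (leq_trans (leq_bin_exp _ _)) // (leq_trans _ (le_pow _ (ltnW lt_qD))) //.
  by case: q lt_qw {lt_qD} => // q lt_qw; apply: leq_expn2r; nia.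
apply: leq_trans (leq_addl _ _); apply: dominant => //; first by rewrite /stretch addn1.
exact: mul_leq_stretch_sq.
Qed.

(* Imported only now: classical_sets shadows finset's subsetP, setIidPr, subset_trans. *)
From mathcomp Require Import classical_sets reals topology normedtype sequences exp.
Import numFieldNormedType.Exports.
Local Open Scope classical_set_scope.
Local Open Scope ring_scope.

Lemma ler_div_of_mul_le_add (R : realFieldType) (c w t n M K : nat) :
  (0 < t)%N -> (0 < w)%N -> (0 < K)%N -> (c * t <= n + M * t)%N -> (K <= t * w)%N ->
  c%:R / w%:R <= n%:R / K%:R + M%:R :> R.
Proof.
rewrite -!(ltr0n R) -!(ler_nat R) !natrD !natrM => t_gt0 w_gt0 K_gt0 le_ct le_K.
have tw_gt0 : 0 < t%:R * w%:R :> R by rewrite mulr_gt0.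
have -> : c%:R / w%:R = c%:R * t%:R / (t%:R * w%:R) :> R.
  by field; rewrite !gt_eqF.
apply: le_trans (ler_wpM2r _ le_ct) _; first by rewrite invr_ge0 ltW.
rewrite mulrDl; apply: lerD.
  by rewrite ler_wpM2l // lef_pV2 ?posrE.
have -> : M%:R * t%:R / (t%:R * w%:R) = M%:R / w%:R :> R by field; rewrite !gt_eqF.
by rewrite ler_pdivrMr // ler_peMr // ler1n -(ltr0n R).
Qed.

Section Fratio.
Variable R : realType.

Lemma fratio_ge n (G : graph n) : simple_graph G ->
  (chi G)%:R / (omega G)%:R <= fratio R n.
Proof. exact: (le_bigmax_cond _ (fun G => (chi G)%:R / (omega G)%:R)). Qed.

Lemma fratio_le n (B : R) : 0 <= B ->
  (forall G : graph n, simple_graph G -> (chi G)%:R / (omega G)%:R <= B) ->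
  fratio R n <= B.
Proof. exact: bigmax_le. Qed.

Lemma fratio_ge0 n : 0 <= fratio R n.
Proof. exact: bigmax_ge_id. Qed.

Lemma fratio_ge_sq n j : (0 < n)%N -> (n < Ramsey j.+1 j.+1)%N ->
  n%:R / j%:R ^+ 2 <= fratio R n.
Proof.
move=> n_gt0 /graph_of_colouring[G sG [le_n le_omega]].
have j_gt0 : (0 < j)%N by case: j {le_omega} le_n => //; rewrite muln0 leqNgt n_gt0.
apply: le_trans (fratio_ge sG).
have le_chi_j : n%:R / j%:R ^+ 2 <= (chi G)%:R / j%:R :> R.
  rewrite expr2 invfM mulrA ler_wpM2r ?invr_ge0 // ler_pdivrMr ?ltr0n //.
  by rewrite -natrM ler_nat.
apply: le_trans le_chi_j _; rewrite ler_wpM2l // lef_pV2 ?posrE ?ltr0n ?omega_gt0 //.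
by rewrite ler_nat.
Qed.

Lemma fratio_le_Ramsey n D k : Ramsey_diagonal_dominant ->
  (0 < n)%N -> (0 < D)%N -> (0 < k)%N ->
  fratio R n <= n%:R / (k ^ 2)%:R + (k ^ (2 * D))%:R +
                (Ramsey (stretch D k) (stretch D k))%:R.
Proof.
move=> dominant n_gt0 D_gt0 k_gt0; apply: fratio_le => [|G sG].
  by rewrite !addr_ge0 ?divr_ge0.
have w_gt0 := omega_gt0 G n_gt0; set w := omega G in w_gt0 *.
have k2_gt0 : (0 < k ^ 2)%N by rewrite expn_gt0 k_gt0.
set q := ((k ^ 2).-1 %/ w)%N.
have lt_qw : (q * w < k ^ 2)%N.
  by apply: leq_ltn_trans (leq_divM _ _) _; rewrite prednK.
have le_k2 : (k ^ 2 <= q.+1 * w)%N by have := ltn_ceil (k ^ 2).-1 w_gt0; rewrite prednK.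
have := ler_div_of_mul_le_add R (ltn0Sn q) w_gt0 k2_gt0 (chi_Ramsey sG (ltn0Sn q)) le_k2.
move/le_trans; apply; rewrite -addrA lerD2l -natrD ler_nat.
exact: Ramsey_le_stretch.
Qed.

End Fratio.

Lemma nat_crossing (g : nat -> nat) a b m : (a <= b)%N -> (g a <= m)%N -> (m < g b)%N ->
  exists j, [/\ (a <= j)%N, (j < b)%N, (g j <= m)%N & (m < g j.+1)%N].
Proof.
elim: b => [|b IHb]; first by rewrite leqn0 => /eqP-> /leq_ltn_trans lt /lt; rewrite ltnn.
rewrite leq_eqVlt => /predU1P[-> /leq_ltn_trans lt /lt|]; first by rewrite ltnn.
rewrite ltnS => le_ab le_gam lt_m; have [le_gbm|lt_mgb] := leqP (g b) m.
  by exists b.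
by have [j [? ? ? ?]] := IHb le_ab le_gam lt_mgb; exists j; split=> //; rewrite ltnW.
Qed.

Lemma ln_nat_ge0 (R : realType) n : 0 <= ln (n%:R : R).
Proof. by case: n => [|n]; [rewrite ln0 | rewrite ln_ge0 // ler1n]. Qed.

Lemma poly_le_expR (R : realType) (A e c : R) p : 0 <= A -> 0 < e -> 0 < c ->
  \forall k \near \oo, A * k.+1%:R ^+ p <= e * expR (c * k%:R).
Proof.
move=> A_ge0 e_gt0 c_gt0; set F : R := p.+1`!%:R.
have F_gt0 : 0 < F by rewrite ltr0n fact_gt0.
near=> k.
have k_ge1 : 1 <= k%:R :> R by rewrite ler1n; near: k; exact: nbhs_infty_gt.
have k_large : A * 2 ^+ p * F / e <= c ^+ p.+1 * k%:R.
  rewrite -ler_pdivrMl ?exprn_gt0 //; near: k; exact: nbhs_infty_ger.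
have le_2k : A * k.+1%:R ^+ p <= A * 2 ^+ p * k%:R ^+ p.
  rewrite -mulrA -exprMn ler_wpM2l // lerXn2r ?nnegrE ?mulr_ge0 //.
  by rewrite -addn1 natrD; lra.
have ck_ge0 : 0 <= c * k%:R by rewrite mulr_ge0 // ltW.
have key : A * 2 ^+ p * F / e * k%:R ^+ p <= (c * k%:R) ^+ p.+1.
  have -> : (c * k%:R) ^+ p.+1 = c ^+ p.+1 * k%:R * k%:R ^+ p.
    by rewrite exprMn [k%:R ^+ p.+1]exprS mulrA.
  by rewrite ler_wpM2r ?exprn_ge0.
apply: le_trans le_2k _.
have -> : A * 2 ^+ p * k%:R ^+ p = e * (A * 2 ^+ p * F / e * k%:R ^+ p / F).
  by field; rewrite !gt_eqF.
apply: ler_wpM2l; first exact: ltW.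
apply: le_trans _ (expR_ge1Dxn p ck_ge0).
have : A * 2 ^+ p * F / e * k%:R ^+ p / F <= (c * k%:R) ^+ p.+1 / F.
  by apply: ler_wpM2r => //; rewrite invr_ge0 ltW.
lra.
Unshelve. all: by end_near.
Qed.

Lemma near_truncn_ln (R : realType) (b : R) (P : nat -> Prop) : 0 < b ->
  (\forall k \near \oo, P k) -> \forall n \near \oo, P (Num.truncn (ln (n%:R : R) / b)).
Proof.
move=> b_gt0 [N _ PN]; exists (Num.truncn (expR (b * N%:R))).+1 => // n /= lt_n.
apply: PN => /=; have n_gt0 : 0 < n%:R :> R by rewrite ltr0n (leq_trans _ lt_n).
rewrite truncn_ge_nat; last by rewrite divr_ge0 ?ln_nat_ge0 // ltW.
rewrite ler_pdivlMr // mulrC.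
rewrite -ler_expR lnK ?posrE //; apply/ltW/(lt_le_trans (truncnS_gt _)).
by rewrite ler_nat.
Qed.

Lemma stretch_le (R : realFieldType) (c d : R) D k : 0 <= c -> (0 < D)%N ->
  c <= d * D%:R -> c * (stretch D k)%:R <= c + (c + d) * k%:R.
Proof.
move=> c_ge0 D_gt0 le_cd; rewrite /stretch !natrD mulrDr mulrDl mulr1.
have le_div : (k %/ D)%:R * D%:R <= k%:R :> R by rewrite -natrM ler_nat leq_divM.
have D_gt0' : 0 < D%:R :> R by rewrite ltr0n.
suff : c * (k %/ D)%:R <= d * k%:R by lra.
rewrite -(ler_pM2r D_gt0') -mulrA; apply: le_trans (ler_wpM2l c_ge0 le_div) _.
have k_ge0 : 0 <= k%:R :> R by [].
nra.
Qed.

Lemma Ramsey_stretch_le_expR (R : realType) (c d : R) D k :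
  0 <= c -> (0 < D)%N -> c <= d * D%:R ->
  ln ((Ramsey (stretch D k) (stretch D k))%:R : R) <= c * (stretch D k)%:R ->
  (Ramsey (stretch D k) (stretch D k))%:R <= expR c * expR ((c + d) * k%:R) :> R.
Proof.
move=> c_ge0 D_gt0 le_cD le_ln.
have R_gt0 : 0 < (Ramsey (stretch D k) (stretch D k))%:R :> R.
  by rewrite ltr0n (leq_trans _ (Ramsey_diag_ge _)) // /stretch addn1.
rewrite -expRD -[X in X <= _]lnK ?posrE // ler_expR.
exact: le_trans le_ln (stretch_le k c_ge0 D_gt0 le_cD).
Qed.

Lemma sqr_le_floor (R : realFieldType) (b x : R) k : 0 < b -> 0 <= x ->
  x < b * k.+1%:R -> x ^+ 2 <= b ^+ 2 * k.+1%:R ^+ 2.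
Proof.
move=> b_gt0 x_ge0 lt_x; have bk_ge0 : 0 <= b * k.+1%:R by rewrite mulr_ge0 // ltW.
by rewrite -exprMn; apply: lerXn2r; rewrite ?nnegrE //; apply: ltW.
Qed.

Lemma sqr_div_floor_le (R : realFieldType) (b s x : R) k : 0 < b -> 0 <= x ->
  x < b * k.+1%:R -> (0 < k)%N -> 3 * b ^+ 2 <= s * k%:R ->
  (x / k%:R) ^+ 2 <= b ^+ 2 + s.
Proof.
move=> b_gt0 x_ge0 lt_x k_gt0 le_3b2.
have := sqr_le_floor b_gt0 x_ge0 lt_x; rewrite -[k.+1]addn1 natrD => le_x2.
have k_ge1 : 1 <= k%:R :> R by rewrite ler1n.
by rewrite expr_div_n ler_pdivrMr ?exprn_gt0 ?ltr0n //; nra.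
Qed.

Lemma sqr_div_expR_le (R : realType) (b s x y Z : R) k : 0 < b -> 0 <= x ->
  x < b * k.+1%:R -> expR (b * k%:R) <= y -> 0 <= Z ->
  b ^+ 2 * k.+1%:R ^+ 2 * Z <= s * expR (b * k%:R) -> x ^+ 2 * Z / y <= s.
Proof.
move=> b_gt0 x_ge0 lt_x le_y Z_ge0 le_Z.
have y_gt0 : 0 < y := lt_le_trans (expR_gt0 _) le_y.
have s_ge0 : 0 <= s.
  rewrite -(pmulr_lge0 _ (expR_gt0 (b * k%:R))).
  exact: le_trans (mulr_ge0 (mulr_ge0 (sqr_ge0 b) (sqr_ge0 _)) Z_ge0) le_Z.
have le_x2Z := ler_wpM2r Z_ge0 (sqr_le_floor b_gt0 x_ge0 lt_x).
rewrite ler_pdivrMr //; apply: le_trans le_x2Z (le_trans le_Z _).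
exact: (ler_wpM2l s_ge0 le_y).
Qed.

Lemma cvg_sq_squeeze (R : realType) (u : nat -> R) (l : R) : 0 <= l ->
  (forall n, 0 <= u n) ->
  (forall c, 0 <= c -> c < l -> \forall n \near \oo, c ^+ 2 <= u n) ->
  (forall a, l < a -> \forall n \near \oo, u n <= a ^+ 2) ->
  u @ \oo --> l ^+ 2.
Proof.
move=> l_ge0 u_ge0 lower upper; apply/cvgrPdist_le => e e_gt0.
pose d := Num.min 1 (e / (2 * l + 1)).
have d_gt0 : 0 < d by rewrite lt_min ltr01 divr_gt0 //; lra.
have d_le1 : d <= 1 by rewrite ge_min lexx.
have d_small : d * (2 * l + 1) <= e.
  by rewrite -ler_pdivlMr; [rewrite ge_min lexx orbT | lra].
have lower_e : \forall n \near \oo, l ^+ 2 - e <= u n.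
  have [->|l_gt0] := eqVneq l 0.
    by near=> n; have := u_ge0 n; rewrite expr0n /=; lra.
  have l_gt0' : 0 < l by rewrite lt_neqAle eq_sym l_gt0.
  pose d' := Num.min l d; have d'_gt0 : 0 < d' by rewrite lt_min l_gt0'.
  have d'_le_l : d' <= l by rewrite ge_min lexx.
  have d'_le_d : d' <= d by rewrite ge_min lexx orbT.
  have c_ge0 : 0 <= l - d' by rewrite subr_ge0.
  have c_lt : l - d' < l by rewrite ltrBlDr ltrDl.
  have d'l_le : d' * l <= d * l by rewrite ler_wpM2r.
  by apply: filterS (lower _ c_ge0 c_lt) => n; apply: le_trans; nra.
have d2_le : d ^+ 2 <= d by rewrite expr2 ler_piMr // ltW.
near=> n; rewrite ler_distl; apply/andP; split.
  have : u n <= (l + d) ^+ 2 by near: n; apply: upper; rewrite ltrDl.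
  nra.
have : l ^+ 2 - e <= u n by near: n; exact: lower_e.
lra.
Unshelve. all: by end_near.
Qed.

Definition normalized_fratio (R : realType) (n : nat) : R :=
  ln (n%:R : R) ^+ 2 / n%:R * fratio R n.

Section RamseyAsymptotics.
Variables (R : realType) (l : R).
Hypothesis dominant : Ramsey_diagonal_dominant.
Hypothesis Ramsey_rate :
  (fun k : nat => ln ((Ramsey k k)%:R : R) / k%:R) @ \oo --> l.

Lemma Ramsey_rate_ge0 : 0 <= l.
Proof.
rewrite leNgt; apply/negP => /(cvgr_lt _ Ramsey_rate)[N _ /(_ N (leqnn N))] /=.
by rewrite ltNge divr_ge0 ?ln_nat_ge0.
Qed.

Lemma ln_Ramsey_le c : l < c -> \forall k \near \oo, ln ((Ramsey k k)%:R : R) <= c * k%:R.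
Proof.
move=> lt_lc; near=> k; have k_gt0 : 0 < k%:R :> R.
  by rewrite ltr0n; near: k; exact: nbhs_infty_gt.
rewrite -ler_pdivrMr //; near: k; exact: (cvgr_le _ Ramsey_rate _ lt_lc).
Unshelve. all: by end_near.
Qed.

Lemma ln_Ramsey_ge c : c < l -> \forall k \near \oo, c * k%:R <= ln ((Ramsey k k)%:R : R).
Proof.
move=> lt_cl; near=> k; have k_gt0 : 0 < k%:R :> R.
  by rewrite ltr0n; near: k; exact: nbhs_infty_gt.
rewrite -ler_pdivlMr //; near: k; exact: (cvgr_ge _ Ramsey_rate _ lt_cl).
Unshelve. all: by end_near.
Qed.

Lemma normalized_fratio_ge c : 0 <= c -> c < l ->
  \forall n \near \oo, c ^+ 2 <= normalized_fratio R n.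
Proof.
move=> c_ge0 lt_cl; have [K _ rate_K] := ln_Ramsey_ge lt_cl.
pose K1 := maxn K 1; exists (Ramsey K1 K1) => // n /= le_Rn.
have le_K1n : (K1 <= n.+1)%N by rewrite ltnW // ltnS (leq_trans (Ramsey_diag_ge K1)).
have [j [le_K1j _ le_Rjn lt_nRj]] :=
  @nat_crossing (fun k => Ramsey k k) K1 n.+1 n le_K1n le_Rn (Ramsey_diag_ge n.+1).
have j_gt0 : (0 < j)%N by apply: leq_trans le_K1j; rewrite leq_maxr.
have Rj_gt0 : (0 < Ramsey j j)%N by apply: leq_trans (Ramsey_diag_ge j).
have n_gt0 : (0 < n)%N by apply: leq_trans le_Rjn.
have le_c : c <= ln n%:R / j%:R.
  rewrite ler_pdivlMr ?ltr0n //; apply: le_trans (rate_K j _) _ => /=.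
    by apply: leq_trans le_K1j; rewrite leq_maxl.
  by rewrite ler_ln ?posrE ?ltr0n // ler_nat.
have x_ge0 : 0 <= ln n%:R ^+ 2 / n%:R :> R by rewrite divr_ge0 ?sqr_ge0.
rewrite /normalized_fratio; apply: le_trans (ler_wpM2l x_ge0 (fratio_ge_sq R n_gt0 lt_nRj)).
have -> : ln n%:R ^+ 2 / n%:R * (n%:R / j%:R ^+ 2) = (ln n%:R / j%:R) ^+ 2 :> R.
  by field; rewrite !pnatr_eq0 -!lt0n j_gt0 n_gt0.
by rewrite lerXn2r ?nnegrE // (le_trans c_ge0).
Qed.

Lemma normalized_fratio_le_floor (b c d s : R) D n k :
  0 <= c -> 0 < d -> c + 2 * d <= b -> (0 < D)%N -> c <= d * D%:R ->
  (0 < n)%N -> (0 < k)%N -> b * k%:R <= ln n%:R < b * k.+1%:R ->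
  ln ((Ramsey (stretch D k) (stretch D k))%:R : R) <= c * (stretch D k)%:R ->
  3 * b ^+ 2 <= s * k%:R ->
  b ^+ 2 * k.+1%:R ^+ (2 * D).+2 <= s * expR (b * k%:R) ->
  b ^+ 2 * expR c * k.+1%:R ^+ 2 <= s * expR (d * k%:R) ->
  normalized_fratio R n <= b ^+ 2 + 3 * s.
Proof.
move=> c_ge0 d_gt0 le_b D_gt0 le_cD n_gt0 k_gt0 /andP[le_kx lt_xk].
move=> ln_stretch le_3b2 poly_small exp_small; have b_gt0 : 0 < b by lra.
have s_ge0 : 0 <= s.
  have k_gt0' : 0 < k%:R :> R by rewrite ltr0n.
  rewrite -(pmulr_lge0 _ k_gt0').
  exact: (le_trans (mulr_ge0 (ler0n _ 3) (sqr_ge0 b)) le_3b2).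
set x := ln (n%:R : R); have x_ge0 : 0 <= x := ln_nat_ge0 R n.
have le_expn : expR (b * k%:R) <= n%:R by rewrite -[n%:R]lnK ?posrE ?ltr0n // ler_expR.
have x2n_ge0 : 0 <= x ^+ 2 / n%:R by rewrite divr_ge0 ?sqr_ge0.
rewrite /normalized_fratio -/x.
apply: le_trans (ler_wpM2l x2n_ge0 (fratio_le_Ramsey R dominant n_gt0 D_gt0 k_gt0)) _.
have -> : x ^+ 2 / n%:R * (n%:R / (k ^ 2)%:R + (k ^ (2 * D))%:R +
      (Ramsey (stretch D k) (stretch D k))%:R) =
    (x / k%:R) ^+ 2 + x ^+ 2 * (k ^ (2 * D))%:R / n%:R +
      x ^+ 2 * (Ramsey (stretch D k) (stretch D k))%:R / n%:R.
  by rewrite natrX; field; rewrite !pnatr_eq0 -!lt0n n_gt0 k_gt0.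
have main_term := sqr_div_floor_le b_gt0 x_ge0 lt_xk k_gt0 le_3b2.
have poly_term : x ^+ 2 * (k ^ (2 * D))%:R / n%:R <= s.
  apply: (sqr_div_expR_le b_gt0 x_ge0 lt_xk le_expn) => //.
  apply: le_trans poly_small; rewrite -mulrA (ler_pM2l (exprn_gt0 2 b_gt0)).
  rewrite -!natrX -natrM ler_nat -[(2 * D).+2]addn2 expnD mulnC leq_mul2r.
  by rewrite leq_expn2r ?orbT.
have Ramsey_term : x ^+ 2 * (Ramsey (stretch D k) (stretch D k))%:R / n%:R <= s.
  apply: (sqr_div_expR_le b_gt0 x_ge0 lt_xk le_expn) => //.
  have bk_ge0 : 0 <= b ^+ 2 * k.+1%:R ^+ 2 by rewrite mulr_ge0 ?sqr_ge0.
  have le_R := Ramsey_stretch_le_expR c_ge0 D_gt0 le_cD ln_stretch.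
  apply: le_trans (ler_wpM2l bk_ge0 le_R) _.
  have -> : b ^+ 2 * k.+1%:R ^+ 2 * (expR c * expR ((c + d) * k%:R)) =
      b ^+ 2 * expR c * k.+1%:R ^+ 2 * expR ((c + d) * k%:R) by ring.
  apply: le_trans (_ : _ <= s * expR (d * k%:R) * expR ((c + d) * k%:R)) _.
    by apply: ler_wpM2r; [exact: expR_ge0 | exact: exp_small].
  rewrite -mulrA -expRD ler_wpM2l // ler_expR -mulrDl ler_wpM2r //; lra.
lra.
Qed.

Lemma normalized_fratio_le a : l < a ->
  \forall n \near \oo, normalized_fratio R n <= a ^+ 2.
Proof.
move=> lt_la; have l_ge0 := Ramsey_rate_ge0.
pose η := (a - l) / 3; have η_gt0 : 0 < η by rewrite divr_gt0 // subr_gt0.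
pose b := l + 2 * η; have b_gt0 : 0 < b by rewrite /b; lra.
pose s := (a ^+ 2 - b ^+ 2) / 3.
have s_gt0 : 0 < s by rewrite divr_gt0 // subr_gt0 !expr2 /b /η; nra.
pose D := (Num.truncn ((l + η) / (η / 2))).+1.
have η2_gt0 : 0 < η / 2 by rewrite divr_gt0.
have le_D : l + η <= η / 2 * D%:R.
  by have := truncnS_gt ((l + η) / (η / 2)); rewrite -/D ltr_pdivrMr // mulrC => /ltW.
have [K _ le_K] := @ln_Ramsey_le (l + η) (ltr_pwDr η_gt0 (lexx l)).
pose good k := [/\ (0 < k)%N,
  ln ((Ramsey (stretch D k) (stretch D k))%:R : R) <= (l + η) * (stretch D k)%:R,
  3 * b ^+ 2 <= s * k%:R,
  b ^+ 2 * k.+1%:R ^+ (2 * D).+2 <= s * expR (b * k%:R) &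
  b ^+ 2 * expR (l + η) * k.+1%:R ^+ 2 <= s * expR (η / 2 * k%:R)].
have good_ev : \forall k \near \oo, good k.
  near=> k; split.
  - by near: k; exact: nbhs_infty_gt.
  - near: k; exists K => // k /= le_Kk; apply: le_K.
    exact: leq_trans le_Kk (leq_stretch D k).
  - by rewrite -ler_pdivrMl //; near: k; exact: nbhs_infty_ger.
  - by near: k; apply: poly_le_expR; rewrite ?sqr_ge0.
  - by near: k; apply: poly_le_expR => //; rewrite mulr_ge0 ?sqr_ge0 ?expR_ge0.
near=> n.
have -> : a ^+ 2 = b ^+ 2 + 3 * s by rewrite /s; field.
have [k_gt0 ln_stretch le_3b2 poly_small exp_small] : good (Num.truncn (ln n%:R / b)).
  by near: n; exact: near_truncn_ln.
apply: normalized_fratio_le_floor ln_stretch le_3b2 poly_small exp_small => //.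
- by rewrite addr_ge0 // ltW.
- by rewrite /b; lra.
- by near: n; exact: nbhs_infty_gt.
- have /andP[] := truncn_itv (divr_ge0 (ln_nat_ge0 R n) (ltW b_gt0)).
  by rewrite ler_pdivlMr // ltr_pdivrMr // ![_ * b]mulrC => -> ->.
Unshelve. all: by end_near.
Qed.

Lemma normalized_fratio_cvg : normalized_fratio R @ \oo --> l ^+ 2.
Proof.
apply: cvg_sq_squeeze Ramsey_rate_ge0 _ normalized_fratio_ge normalized_fratio_le => n.
by rewrite mulr_ge0 ?divr_ge0 ?sqr_ge0 ?fratio_ge0.
Qed.

End RamseyAsymptotics.

Unset Implicit Arguments.

Theorem theorem1p2 (R : realType) (L : R) :
  (forall s t k : nat, (0 < s)%N -> (0 < t)%N -> (0 < k)%N ->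
     (s * t <= k ^ 2)%N -> (Ramsey s t <= Ramsey k k)%N) ->
  (fun k : nat => log2 ((Ramsey k k)%:R : R) / k%:R) @ \oo --> L ->
  (fun n : nat => (log2 (n%:R : R)) ^+ 2 / n%:R * fratio R n) @ \oo --> L ^+ 2.
Proof.
move=> dominant log2_rate; have ln2_neq0 : ln (2 : R) != 0 by rewrite gt_eqF ?ln_gt0 ?ltr1n.
have ln_rate : (fun k : nat => ln ((Ramsey k k)%:R : R) / k%:R) @ \oo --> ln 2 * L.
  have -> : (fun k : nat => ln ((Ramsey k k)%:R : R) / k%:R) =
      (fun k => ln 2 * (log2 ((Ramsey k k)%:R : R) / k%:R)).
    by apply/funext => k; rewrite /log2 [ln _ / ln 2]mulrC !mulrA mulfV // mul1r.
  exact: cvgM (cvg_cst _) log2_rate.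
have -> : (fun n : nat => (log2 (n%:R : R)) ^+ 2 / n%:R * fratio R n) =
    (fun n => (ln 2)^-2 * normalized_fratio R n).
  by apply/funext => n; rewrite /log2 /normalized_fratio expr_div_n; ring.
have -> : L ^+ 2 = (ln 2)^-2 * (ln 2 * L) ^+ 2 by field.
exact: cvgM (cvg_cst _) (normalized_fratio_cvg dominant ln_rate).
Qed.
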